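(* Let $\mathbb{K}$ be a perfect field, $\mathbf{u}_1,\dots,\mathbf{u}_t\in\mathbb{K}^{\mathbb{N}^n}$ with $\mathrm{ann}(\mathbf{u}_1,\dots,\mathbf{u}_t)$ zero-dimensional, and fix $j\in\{1,\dots,n\}$. Suppose $b_1<\cdots<b_u<b_{u+1}$ are the first $u+1$ standard monomials of $\mathbb{K}[X_j,\dots,X_n]/J_j$ for the lexicographic order induced by $X_j>\cdots>X_n$, with $b_1=1$. Then for any monomial $b$ with $b_u<b<b_{u+1}$, the family $\{b_1,\dots,b_u,b\}$ is dependent.
   Context: For $m\in\mathbb{N}^n$, $\mathbf{X}^m=X_1^{m_1}\cdots X_n^{m_n}$; for a sequence $\mathbf{u}=(u_m)_m$ and $f=\sum_m f_m\mathbf{X}^m$, $\langle\mathbf{u}\mid f\rangle=\sum_mf_mu_m$, $f\cdot\mathbf{u}=(\langle\mathbf{u}\mid\mathbf{X}^mf\rangle)_m$, $\mathrm{ann}(\mathbf{u})$ is the ideal of $f$ with $f\cdot\mathbf{u}=0$, and $\mathrm{ann}$ of several sequences is the intersection. $\pi_j(\mathbf{u}_i)$ is the sequence indexed by $\mathbb{N}^{n-j+1}$ with $\langle\pi_j(\mathbf{u}_i)\mid(m_j,\dots,m_n)\rangle=\langle\mathbf{u}_i\mid(0,\dots,0,m_j,\dots,m_n)\rangle$, and $J_j=\mathrm{ann}(\pi_j(\mathbf{u}_1),\dots,\pi_j(\mathbf{u}_t))\subset\mathbb{K}[X_j,\dots,X_n]$. A family of monomials in $\mathbb{K}[X_j,\dots,X_n]$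 is dependent if its images modulo $J_j$ are $\mathbb{K}$-linearly dependent. *)

From HB Require Import structures.
From mathcomp Require Import all_boot all_order all_algebra.
From mathcomp Require Import mpoly.
Set Implicit Arguments. Unset Strict Implicit. Unset Printing Implicit Defensive.
Import GRing.Theory.
Local Open Scope ring_scope.

Definition perfect_field (K : fieldType) : Prop :=
  forall p : nat, p \in [pchar K] -> forall x : K, exists y : K, y ^+ p = x.

Section Seqs.
Variables (K : fieldType) (k : nat).

Definition mseq := 'X_{1..k} -> K.

Definition pairing (u : mseq) (f : {mpoly K[k]}) : K :=
  \sum_(m <- msupp f) f@_m * u m.

Definition shift (f : {mpoly K[k]}) (u : mseq) : mseq :=
  fun m => pairing u ('X_[m] * f).

Definition in_ann (t : nat) (us : 'I_t -> mseq) (f : {mpoly K[k]}) : Prop :=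
  forall i : 'I_t, forall m : 'X_{1..k}, shift f (us i) m = 0.

(* The ideal I (given as a predicate) is zero-dimensional: K[X]/I is a
   finite dimensional K-vector space, i.e. spanned by the classes of
   finitely many polynomials. *)
Definition zero_dim (I : {mpoly K[k]} -> Prop) : Prop :=
  exists s : seq {mpoly K[k]}, forall f : {mpoly K[k]},
    exists c : 'I_(size s) -> K, I (f - \sum_(i < size s) c i *: s`_i).

(* Lexicographic order with X_1 > X_2 > ... > X_k (index 0 is the largest
   variable): m1 <lex m2. *)
Definition lex_lt (m1 m2 : 'X_{1..k}) : Prop :=
  exists i : 'I_k, (forall l : 'I_k, (l < i)%N -> m1 l = m2 l) /\ (m1 i < m2 i)%N.

Definition lex_lead (f : {mpoly K[k]}) (m : 'X_{1..k}) : Prop :=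
  m \in msupp f /\ forall m', m' \in msupp f -> m' <> m -> lex_lt m' m.

Definition lex_standard (I : {mpoly K[k]} -> Prop) (m : 'X_{1..k}) : Prop :=
  ~ exists f : {mpoly K[k]}, [/\ I f, f != 0 & lex_lead f m].

Definition dependent (I : {mpoly K[k]} -> Prop) (bs : seq 'X_{1..k}) : Prop :=
  exists c : 'I_(size bs) -> K,
    (exists i, c i != 0) /\ I (\sum_(i < size bs) c i *: 'X_[nth 0%MM bs i]).

End Seqs.

(* pi_j(u): for j0 = j - 1 (0-based), the sequence on N^(n-j0) given by
   m' |-> u (0,...,0,m') (j0 leading zeros). *)
Definition proj (K : fieldType) (n : nat) (j0 : 'I_n) (u : mseq K n)
  : mseq K (n - j0) :=
  fun m' => u [multinom (if (j0 <= i)%N then nth 0%N m' (i - j0) else 0%N) | i < n].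
Arguments proj {K n} j0 u _.

From HB Require Import structures.
From mathcomp Require Import all_boot all_order all_algebra.
From mathcomp Require Import bigenough ssrcomplements mpoly.
From Stdlib Require Import Classical.
Set Implicit Arguments. Unset Strict Implicit.
Import GRing.Theory BigEnough.
Local Open Scope ring_scope.

(* An annihilator ideal is a K-subspace, and modulo any subspace I every
   monomial m <lex b_{u+1} is congruent to a combination of b_1, ..., b_u.
   This goes by well-founded induction on the lex order: a standard such m
   is one of the b_i (and not b_{u+1}), while a non-standard m is the leading
   monomial of some f in I, so X^m is congruent to a combination of the
   lex-smaller monomials of f.  Applied to m = b, the congruence is the
   required dependence. *)

Section Pairing.
Variables (K : fieldType) (k : nat).

Lemma pairing_msizeE (v : mseq K k) (p : {mpoly K[k]}) i : (msize p <= i)%N ->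
  pairing v p = \sum_(m : 'X_{1..k < i}) p@_m * v m.
Proof.
move=> le_pi; rewrite /pairing (big_mksub 'X_{1..k < i}) ?msupp_uniq //=.
  by rewrite big_rmcond //= => m /memN_msupp_eq0 ->; rewrite mul0r.
by move=> m /msize_mdeg_lt /leq_trans; apply.
Qed.

Lemma pairing_is_linear (v : mseq K k) : linear_for *%R (pairing v).
Proof.
move=> a p q; pose_big_enough i.
  rewrite !(pairing_msizeE v (i := i)) // mulr_sumr -big_split /=.
  apply: eq_bigr => m _.
  by rewrite mcoeffD mcoeffZ mulrDl mulrA.
by close.
Qed.

HB.instance Definition _ (v : mseq K k) :=
  GRing.isLinear.Build K {mpoly K[k]} K *%R (pairing v) (pairing_is_linear v).

Lemma shift_is_linear (v : mseq K k) m : linear_for *%R (fun f => shift f v m).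
Proof. by move=> a f g; rewrite /shift mulrDr -scalerAr linearP. Qed.

Lemma in_ann0 t (us : 'I_t -> mseq K k) : in_ann us 0.
Proof. by move=> i m; rewrite /shift mulr0 linear0. Qed.

Lemma in_ann_lin t (us : 'I_t -> mseq K k) a f g :
  in_ann us f -> in_ann us g -> in_ann us (a *: f + g).
Proof. by move=> If Ig i m; rewrite shift_is_linear If Ig mulr0 addr0. Qed.

End Pairing.

Section LexOrder.
Variable k : nat.
Implicit Types m : 'X_{1..k}.

Lemma lex_ltxx m : ~ lex_lt m m.
Proof. by case=> i [_]; rewrite ltnn. Qed.

Lemma lex_lt_trans m2 m1 m3 : lex_lt m1 m2 -> lex_lt m2 m3 -> lex_lt m1 m3.
Proof.
case=> i [eq12 lt12] [j [eq23 lt23]].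
case: (ltngtP i j) => [lt_ij | lt_ji | /val_inj eq_ij].
- exists i; split=> [l lt_li|]; last by rewrite -(eq23 i lt_ij).
  by rewrite eq12 // eq23 // (ltn_trans lt_li lt_ij).
- exists j; split=> [l lt_lj|]; last by rewrite (eq12 j lt_ji).
  by rewrite eq12 ?eq23 // (ltn_trans lt_lj lt_ji).
- subst j; exists i; split; last exact: ltn_trans lt12 lt23.
  by move=> l lt_li; rewrite eq12 ?eq23.
Qed.

Definition lex_lt_from (i : nat) m1 m2 :=
  (forall l : 'I_k, (l < i)%N -> m1 l = m2 l) /\ lex_lt m1 m2.

(* Descending induction on i: a descent in [lex_lt_from i] either lowers the
   exponent of variable i or is a descent in [lex_lt_from i.+1]. *)
Lemma Acc_lex_lt_from i m : Acc (lex_lt_from i) m.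
Proof.
move Ed: (k - i)%N => d; elim: d i Ed m => [|d IHd] i Ed m.
  constructor=> m1 [eq_m1m [j [_ lt_j]]].
  move: lt_j; rewrite eq_m1m ?ltnn // (leq_trans (ltn_ord j)) //.
  by rewrite -subn_eq0 Ed.
have lt_ik : (i < k)%N by rewrite -subn_gt0 Ed.
pose io := Ordinal lt_ik.
have {}IHd m' : Acc (lex_lt_from i.+1) m' by apply: IHd; rewrite subnS Ed.
move Ev: (m io) => v; elim/ltn_ind: v m Ev => v IHv m Ev.
elim: (IHd m) Ev => {}m _ IHm Ev.
constructor=> m1 [eq_m1m [j [eq_j lt_j]]].
case: (ltngtP j i) => [lt_ji | lt_ij | eq_ji].
- by move: lt_j; rewrite eq_m1m ?ltnn.
- apply: IHm; last by rewrite -Ev eq_j.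
  split; last by exists j.
  move=> l; rewrite ltnS leq_eqVlt => /predU1P [eq_li | /eq_m1m //].
  by apply: eq_j; rewrite eq_li.
- have eq_jio : j = io by apply: val_inj.
  by apply: (IHv (m1 io)); rewrite // -Ev -eq_jio.
Qed.

Lemma wf_lex_lt : well_founded (@lex_lt k).
Proof.
move=> m; elim: (Acc_lex_lt_from 0 m) => {}m _ IH.
by constructor=> m1 lt_m1m; apply: IH.
Qed.

End LexOrder.

Section SpanModulo.
Variables (K : fieldType) (k : nat) (I : {mpoly K[k]} -> Prop).

Definition lincomb (s : seq 'X_{1..k}) (c : nat -> K) : {mpoly K[k]} :=
  \sum_(i < size s) c i *: 'X_[nth 0%MM s i].

Definition in_span_mod (s : seq 'X_{1..k}) (g : {mpoly K[k]}) :=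
  exists c : nat -> K, I (g - lincomb s c).

Lemma dependent_rcons s b : in_span_mod s 'X_[b] -> dependent I (rcons s b).
Proof.
case=> c Ic.
exists (fun i : 'I_(size (rcons s b)) => if (i < size s)%N then - c i else 1).
split.
  have lt_s : (size s < size (rcons s b))%N by rewrite size_rcons.
  by exists (Ordinal lt_s); rewrite /= ltnn oner_neq0.
set F := fun i =>
  (if (i < size s)%N then - c i else 1) *: 'X_[nth 0%MM (rcons s b) i].
rewrite -(big_mkord xpredT F) size_rcons big_nat_recr //= big_mkord addrC.
rewrite /F ltnn scale1r nth_rcons ltnn eqxx /lincomb -sumrN in Ic *.
congr (I (_ + _)): Ic; apply: eq_bigr => i _.
by rewrite ltn_ord nth_rcons ltn_ord scaleNr.
Qed.

Hypothesis I0 : I 0.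
Hypothesis I_lin : forall a f g, I f -> I g -> I (a *: f + g).
Implicit Type s : seq 'X_{1..k}.

Lemma lincomb_lin s a c d :
  lincomb s (fun i => a * c i + d i) = a *: lincomb s c + lincomb s d.
Proof.
rewrite /lincomb scaler_sumr -big_split /=.
by apply: eq_bigr => i _; rewrite scalerDl scalerA.
Qed.

Lemma in_span_mod_lin s a f g :
  in_span_mod s f -> in_span_mod s g -> in_span_mod s (a *: f + g).
Proof.
case=> c Ic [d Id]; exists (fun i => a * c i + d i).
by rewrite lincomb_lin opprD addrACA -scalerBr; apply: I_lin.
Qed.

Lemma in_span_modI s f : I f -> in_span_mod s f.
Proof.
move=> If; exists (fun=> 0).
by rewrite /lincomb big1 ?subr0 // => i _; rewrite scale0r.
Qed.

Lemma in_span_modD s f g :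
  in_span_mod s f -> in_span_mod s g -> in_span_mod s (f + g).
Proof. by rewrite -{2}[f]scale1r; apply: in_span_mod_lin. Qed.

Lemma in_span_modZ s a g : in_span_mod s g -> in_span_mod s (a *: g).
Proof.
move=> Sg; rewrite -[_ *: g]addr0.
by apply: in_span_mod_lin => //; exact: in_span_modI.
Qed.

Lemma in_span_mod_mem s m : m \in s -> in_span_mod s 'X_[m].
Proof.
move=> sm; exists (fun i => (i == index m s)%:R).
have lt_ms : (index m s < size s)%N by rewrite index_mem.
rewrite /lincomb (bigD1 (Ordinal lt_ms)) //= eqxx scale1r nth_index //.
rewrite big1 ?addr0 ?subrr // => i /negbTE ne_i.
by rewrite -val_eqE /= in ne_i; rewrite ne_i scale0r.
Qed.

Lemma in_span_mod_sum s (r : seq 'X_{1..k}) (P : pred 'X_{1..k})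
    (F : 'X_{1..k} -> K) :
  {in r, forall m, P m -> in_span_mod s 'X_[m]} ->
  in_span_mod s (\sum_(m <- r | P m) F m *: 'X_[m]).
Proof.
move=> Sr; rewrite big_seq_cond; apply: big_ind => [|f g|m /andP [rm Pm]].
- exact: in_span_modI.
- exact: in_span_modD.
- by apply: in_span_modZ; apply: Sr.
Qed.

Lemma in_span_mod_lead s f m : I f -> m \in msupp f ->
  {in msupp f, forall m', m' != m -> in_span_mod s 'X_[m']} ->
  in_span_mod s 'X_[m].
Proof.
move=> If fm Slower; set c := f@_m.
have c_neq0 : c != 0 by rewrite -mcoeff_msupp.
have -> : 'X_[m] = c^-1 *: f + (- c^-1) *:
    \sum_(m' <- msupp f | m' != m) f@_m' *: 'X_[m'].
  by rewrite {1}(mpolyE f) (bigD1_seq m) ?msupp_uniq //= scalerDr scalerA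
    mulVf // scale1r scaleNr addrK.
apply: in_span_mod_lin; first exact: in_span_modI.
by apply: in_span_modZ; apply: in_span_mod_sum.
Qed.

Variables (u : nat) (bs : seq 'X_{1..k}).
Hypothesis size_bs : size bs = u.+1.
Hypothesis std_below_mem :
  forall m, lex_standard I m -> lex_lt m (nth 0%MM bs u) -> m \in bs.

Lemma in_span_mod_lex_below m :
  lex_lt m (nth 0%MM bs u) -> in_span_mod (take u bs) 'X_[m].
Proof.
have bsE : bs = rcons (take u bs) (nth 0%MM bs u).
  by rewrite -take_nth ?size_bs // -size_bs take_size.
elim: (wf_lex_lt m) => {}m _ IH lt_m.
have [std_m | /NNPP [f [If _ [fm lead_m]]]] := classic (lex_standard I m).
  apply: in_span_mod_mem; move: (std_below_mem std_m lt_m).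
  rewrite {1}bsE mem_rcons inE => /predU1P [eq_m | //].
  by move: lt_m; rewrite -eq_m => /lex_ltxx.
apply: (in_span_mod_lead If fm) => m' fm' ne_m'm.
have lt_m'm : lex_lt m' m by apply: lead_m; last exact: elimN eqP ne_m'm.
by apply: IH; last exact: lex_lt_trans lt_m'm lt_m.
Qed.

End SpanModulo.

Theorem lemma5 (K : fieldType) (HK : perfect_field K) (n t : nat)
  (us : 'I_t -> mseq K n) (H0 : zero_dim (in_ann us))
  (j0 : 'I_n) (u : nat) (Hu : (0 < u)%N) (bs : seq 'X_{1..n - j0})
  (Hsize : size bs = u.+1)
  (Hb1 : nth 0%MM bs 0 = 0%MM)
  (Hsorted : forall i l : nat, (i < l <= u)%N -> lex_lt (nth 0%MM bs i) (nth 0%MM bs l))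
  (Hstd : forall i : nat, (i <= u)%N ->
     lex_standard (in_ann (fun r => proj j0 (us r))) (nth 0%MM bs i))
  (Hfirst : forall m : 'X_{1..n - j0},
     lex_standard (in_ann (fun r => proj j0 (us r))) m ->
     lex_lt m (nth 0%MM bs u) -> m \in bs)
  (b : 'X_{1..n - j0})
  (Hlo : lex_lt (nth 0%MM bs u.-1) b) (Hhi : lex_lt b (nth 0%MM bs u)) :
  dependent (in_ann (fun r => proj j0 (us r))) (rcons (take u bs) b).
Proof.
apply: dependent_rcons.
apply: (in_span_mod_lex_below _ _ Hsize Hfirst Hhi).
- exact: in_ann0.
- exact: in_ann_lin.
Qed.
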